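(* Let $n\ge1$ and let $\mathbf s=(s_1,\dots,s_n)\in\mathbb C^n$ be typical, i.e. $s_i+s_j\neq0$ for all $i\neq j$. Then the restriction of $V(\mathbf s)$ to $W^n$ is a simple $W^n$-module.
   Context: $U(\mathfrak h_n)$ is the associative superalgebra generated by odd elements $\xi_1,\dots,\xi_n$ with $\xi_i\xi_j+\xi_j\xi_i=0$ for $i\neq j$, and $x_i=\xi_i^2$ (central); it is the enveloping algebra of the Cartan subalgebra of the queer Lie superalgebra $Q(n)$. $W^n\subset U(\mathfrak h_n)$ is the finite $W$-algebra of $Q(n)$ for the principal even nilpotent element, realized in $U(\mathfrak h_n)$ via the injective Harish-Chandra homomorphism; concretely it is the subalgebra generated by $u_k(0),u_k(1)$ ($1\le k\le n$), the even and odd parts of $\sum_{1\le i_1<\dots<i_k\le n}\prod_{j=1}^{k}(x_{i_j}+(-1)^{k-j}\xi_{i_j})$ (ordered product). For $\mathbf s\in\mathbb C^n$, $V(\mathbf s)$ is a simple $\mathbb Z_2$-graded $U(\mathfrak h_n)$-module on which each $x_i$ acts by the scalar $s_i$; it exists and is unique up to isomorphism and parity change. *)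

From mathcomp Require Import all_boot all_algebra.
From mathcomp Require Import reals.
From mathcomp Require Export complex.
Set Implicit Arguments. Unset Strict Implicit. Unset Printing Implicit Defensive.
Import GRing.Theory.
Local Open Scope ring_scope.

(* A Z_2-graded vector space is modelled as V = V0 (+) V1, i.e. the product
   type V0 * V1 (even part, odd part). Operators are functions V -> V. *)
Section Super.
Variables (F : fieldType) (V0 V1 : lmodType F).
Local Notation V := (V0 * V1)%type.

Definition is_linear_op (f : V -> V) : Prop :=
  forall (a : F) (u w : V), f (a *: u + w) = a *: f u + f w.

Definition is_odd_op (f : V -> V) : Prop :=
  (forall v0 : V0, (f (v0, 0)).1 = 0) /\ (forall v1 : V1, (f (0, v1)).2 = 0).

Inductive alg_gen (G : (V -> V) -> Prop) : (V -> V) -> Prop :=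
| ag_gen f : G f -> alg_gen G f
| ag_id : alg_gen G id
| ag_add f g : alg_gen G f -> alg_gen G g -> alg_gen G (fun v => f v + g v)
| ag_scale (c : F) f : alg_gen G f -> alg_gen G (fun v => c *: f v)
| ag_comp f g : alg_gen G f -> alg_gen G g -> alg_gen G (fun v => f (g v)).

Definition graded_submodule (G : (V -> V) -> Prop)
    (S0 : V0 -> Prop) (S1 : V1 -> Prop) : Prop :=
  [/\ S0 0, S1 0,
      (forall (a : F) u w, S0 u -> S0 w -> S0 (a *: u + w)),
      (forall (a : F) u w, S1 u -> S1 w -> S1 (a *: u + w)) &
      (forall f, alg_gen G f -> forall v0 v1, S0 v0 -> S1 v1 ->
         S0 (f (v0, v1)).1 /\ S1 (f (v0, v1)).2)].

Definition graded_simple (G : (V -> V) -> Prop) : Prop :=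
  (exists v : V, v != 0) /\
  forall S0 S1, graded_submodule G S0 S1 ->
    ((forall v0, S0 v0 -> v0 = 0) /\ (forall v1, S1 v1 -> v1 = 0)) \/
    ((forall v0, S0 v0) /\ (forall v1, S1 v1)).

Variables (n : nat) (xi : 'I_n -> V -> V).

Definition x_op (i : 'I_n) (v : V) : V := xi i (xi i v).

(* For L = [:: i_1; ...; i_k] (i_1 < ... < i_k) and J a set of positions,
   the action of the ordered monomial obtained from
   prod_{j=1}^k (x_{i_j} + (-1)^(k-j) xi_{i_j}) by choosing the xi-summand
   exactly at the positions in J (0-based positions: j-1).  The leftmost
   factor (j = 1) is applied last. *)
Definition mono_op (k : nat) (L : seq 'I_n) (J : {set 'I_k}) (v : V) : V :=
  foldr (fun (p : 'I_k * 'I_n) w =>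
           if p.1 \in J then (-1) ^+ (k - p.1.+1) *: xi p.2 w
           else x_op p.2 w)
        v (zip (enum 'I_k) L).

(* Action of u_k(b): the even (b = false, i.e. u_k(0)) resp. odd
   (b = true, i.e. u_k(1)) part of
   sum_{i_1 < ... < i_k} prod_{j=1}^k (x_{i_j} + (-1)^(k-j) xi_{i_j}).
   A monomial with |J| factors xi has parity |J| mod 2 (x even, xi odd). *)
Definition u_op (k : nat) (b : bool) (v : V) : V :=
  \sum_(A : {set 'I_n} | #|A| == k)
     \sum_(J : {set 'I_k} | odd #|J| == b) mono_op (enum A) J v.

Definition U_gens (f : V -> V) : Prop := exists i : 'I_n, f = xi i.

Definition W_gens (f : V -> V) : Prop :=
  exists (k : nat) (b : bool), [/\ (1 <= k)%N, (k <= n)%N & f = u_op k b].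

End Super.

(* Let S be a graded W^n-submodule of V(s) and, for c in F^n, let xi_c be the
   odd operator sum_m c_m xi_m.  The coefficient vectors c for which xi_c
   preserves S form a subspace; it contains (1, ..., 1) because
   u_1(1) = sum_i xi_i, and it is stable under c |-> c N because
   [u_2(0), xi_c] = 2 xi_(c N), where N_mj = sgn(j - m) s_m.  For typical s the
   vector (1, ..., 1) is cyclic for N: the partial sums Phi_k of a right
   eigenvector phi of N (eigenvalue l) orthogonal to it satisfy
   (l + s_m) Phi_(m+1) = (l - s_m) Phi_m with Phi_0 = Phi_n = 0, and typicality
   lets this recurrence be run from one end or the other to get phi = 0.  Hence
   every xi_i preserves S, so S is a U(h_n)-submodule and is 0 or V(s). *)

From HB Require Import structures.
From mathcomp Require Import all_boot all_algebra.
From mathcomp Require Import reals complex.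
From mathcomp Require Import ring.
Set Implicit Arguments. Unset Strict Implicit. Unset Printing Implicit Defensive.
Import GRing.Theory Num.Theory.
Local Open Scope ring_scope.

Section TwoTermRecurrence.
Variables (F : idomainType) (n : nat) (a b : 'I_n -> F) (Phi : nat -> F).
Hypothesis rec : forall m : 'I_n, a m * Phi m.+1 = b m * Phi m.

Lemma recurrence_forward k : (k <= n)%N ->
  Phi 0 = 0 -> (forall m : 'I_n, (m < k)%N -> a m != 0) -> Phi k = 0.
Proof.
elim: k => // k IHk lt_kn Phi0 a_nz.
have /eqP := rec (Ordinal lt_kn).
rewrite /= IHk ?(ltnW lt_kn) // => [|m /ltnW]; last exact: a_nz.
by rewrite mulr0 mulf_eq0 (negbTE (a_nz (Ordinal lt_kn) (ltnSn k))) => /eqP.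
Qed.

Lemma recurrence_backward k : (k <= n)%N ->
  Phi n = 0 -> (forall m : 'I_n, (k <= m)%N -> b m != 0) -> Phi k = 0.
Proof.
move=> le_kn Phin; move Ed: (n - k)%N => d.
elim: d k le_kn Ed => [|d IHd] k le_kn Ed b_nz.
  by have -> : k = n by apply/eqP; rewrite eqn_leq le_kn -subn_eq0 Ed.
have lt_kn : (k < n)%N by rewrite -subn_gt0 Ed.
have /eqP := rec (Ordinal lt_kn).
rewrite /= IHd // ?subnS ?Ed // => [|m /ltnW]; last exact: b_nz.
by rewrite mulr0 eq_sym mulf_eq0 (negbTE (b_nz (Ordinal lt_kn) (leqnn k))) => /eqP.
Qed.

Lemma recurrence_boundary_zero :
  Phi 0 = 0 -> Phi n = 0 ->
  (forall m0 m : 'I_n, (m0 < m)%N -> a m0 = 0 -> b m != 0) ->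
  forall k, (k <= n)%N -> Phi k = 0.
Proof.
move=> Phi0 Phin ab_nz k le_kn.
case: (pickP [pred m0 : 'I_n | (m0 < k)%N && (a m0 == 0)]) => [m0 /andP[lt_m0k /eqP am0]|a_nz].
  apply: recurrence_backward => // m le_km; apply: ab_nz am0.
  exact: leq_trans lt_m0k le_km.
apply: recurrence_forward => // m lt_mk.
by have /= := a_nz m; rewrite lt_mk => /negbT.
Qed.

End TwoTermRecurrence.

Definition typical (F : zmodType) n (s : 'I_n -> F) :=
  forall i j, i != j -> s i + s j != 0.

Section SignMatrix.
Variables (F : fieldType) (n : nat) (s : 'I_n -> F).

Definition sign_mx : 'M[F]_n :=
  \matrix_(m, j) (if (m < j)%N then s m else if (j < m)%N then - s m else 0).

Lemma mul_sign_mx (phi : 'cV_n) (m : 'I_n) : (sign_mx *m phi) m 0 =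
  s m * (\sum_(j : 'I_n | (m < j)%N) phi j 0 - \sum_(j : 'I_n | (j < m)%N) phi j 0).
Proof.
rewrite mxE (big_mkcond (fun j : 'I_n => (m < j)%N)).
rewrite (big_mkcond (fun j : 'I_n => (j < m)%N)) -sumrB mulr_sumr.
by apply: eq_bigr => j _; rewrite mxE; case: ltngtP => _; ring.
Qed.

Lemma sign_mx_eigen_sum0 (a : F) (phi : 'cV_n) : typical s ->
  sign_mx *m phi = a *: phi -> (const_mx 1 : 'rV_n) *m phi = 0 -> phi = 0.
Proof.
move=> s_typical eig sum0.
pose Phi k := \sum_(j : 'I_n | (j < k)%N) phi j 0.
have sum_phi : \sum_j phi j 0 = 0.
  have := congr1 (fun M : 'M_1 => M 0 0) sum0; rewrite !mxE.
  by under eq_bigr do rewrite mxE mul1r.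
have Phi0 : Phi 0%N = 0 by rewrite /Phi big_pred0.
have Phin : Phi n = 0 by rewrite -[RHS]sum_phi; apply: eq_bigl => j; rewrite ltn_ord.
have PhiS (m : 'I_n) : Phi m.+1 = Phi m + phi m 0.
  rewrite /Phi (bigD1 m) ?ltnSn //= addrC; congr (_ + _); apply: eq_bigl => j.
  by rewrite ltnS leq_eqVlt -val_eqE; case: ltngtP; rewrite ?andbT ?andbF.
have sum_gt (m : 'I_n) : \sum_(j : 'I_n | (m < j)%N) phi j 0 = - Phi m.+1.
  apply/eqP; rewrite -addr_eq0; apply/eqP.
  rewrite -[RHS]sum_phi [RHS](bigID (fun j : 'I_n => (j < m.+1)%N)) addrC /=.
  by congr (_ + _); apply: eq_bigl => j; rewrite ltnNge ltnS.
have rec (m : 'I_n) : (a + s m) * Phi m.+1 = (a - s m) * Phi m.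
  have := congr1 (fun M : 'cV_n => M m 0) eig; rewrite /= mul_sign_mx sum_gt mxE.
  have -> : phi m 0 = Phi m.+1 - Phi m by rewrite PhiS addrC addKr.
  move=> E.
  have -> : (a + s m) * Phi m.+1 = (a - s m) * Phi m +
      (a * (Phi m.+1 - Phi m) - s m * (- Phi m.+1 - Phi m)) by ring.
  by rewrite E subrr addr0.
have PhiE k : (k <= n)%N -> Phi k = 0.
  apply: (recurrence_boundary_zero rec Phi0 Phin) => m0 m lt_m0m /eqP.
  rewrite addr_eq0 => /eqP ->; rewrite -opprD oppr_eq0.
  by apply: s_typical; rewrite -val_eqE neq_ltn lt_m0m.
apply/matrixP => m j; rewrite (ord1 j) mxE.
by have := PhiS m; rewrite !PhiE ?add0r // ltnW.
Qed.

End SignMatrix.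

Lemma stablemx_eigenvector (F : closedFieldType) m n (V : 'M[F]_(m, n)) f :
  stablemx V f -> V != 0 ->
  exists a (v : 'rV_n), [/\ (v <= V)%MS, v != 0 & v *m f = a *: v].
Proof.
move=> Vf V_nz; set B := row_base V.
have [a] : exists a, root (char_poly (conjmx B f)) a.
  by apply/closed_rootP; rewrite size_char_poly eqSS mxrank_eq0.
rewrite -eigenvalue_root_char => /eigenvalueP[w wf w_nz].
have Bf : stablemx B f by rewrite stablemx_row_base.
have /eigenspaceP wBf : (w *m B <= eigenspace f a)%MS.
  by rewrite -sub_eigenspace_conjmx ?row_base_free //; apply/eigenspaceP.
exists a, (w *m B); split => //; first by rewrite -(eq_row_base V) submxMl.
by rewrite mulmx_free_eq0 ?row_base_free.
Qed.

Section Krylov.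
Variables (F : fieldType) (n : nat) (A : 'M[F]_n.+1) (u : 'rV[F]_n.+1).

Definition krylov_mx : 'M[F]_n.+1 := \matrix_(k < n.+1) (u *m A ^+ k).

Lemma horner_mx_modp_char p : horner_mx A (p %% char_poly A) = horner_mx A p.
Proof.
rewrite [in RHS](divp_eq p (char_poly A)) rmorphD rmorphM /=.
by rewrite Cayley_Hamilton mulr0 add0r.
Qed.

Lemma horner_mx_sub_krylov p : (u *m horner_mx A p <= krylov_mx)%MS.
Proof.
rewrite -horner_mx_modp_char; set r := p %% _.
have le_r : (size r <= n.+1)%N.
  by rewrite -ltnS -(size_char_poly A) ltn_modp monic_neq0 ?char_poly_monic.
rewrite -(coefK r) poly_def linear_sum mulmx_sumr; apply: summx_sub => i _.
rewrite linearZ /= rmorphXn /= horner_mx_X -scalemxAr scalemx_sub //.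
by apply: (eq_row_sub (Ordinal (leq_trans (ltn_ord i) le_r))); rewrite rowK.
Qed.

Lemma sub_krylov : (u <= krylov_mx)%MS.
Proof. by apply: (eq_row_sub 0); rewrite rowK expr0 mulmx1. Qed.

Lemma stablemx_krylov : stablemx krylov_mx A.
Proof.
apply/row_subP => k; rewrite row_mul rowK -mulmxA mulmxE -exprSr.
by rewrite -(horner_mx_X A) -rmorphXn; apply: horner_mx_sub_krylov.
Qed.

Lemma krylov_full_ind (L : 'rV_n.+1 -> Prop) : row_full krylov_mx ->
  L 0 -> (forall a c d, L c -> L d -> L (a *: c + d)) ->
  L u -> (forall c, L c -> L (c *m A)) -> forall c, L c.
Proof.
move=> full L0 Llin Lu LA c.
have Lpow k : L (u *m A ^+ k).
  by elim: k => [|k IHk]; rewrite ?expr0 ?mulmx1 // exprSr -mulmxE mulmxA; apply: LA.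
have [w ->] := submxP (submx_full c full).
rewrite mulmx_sum_row; apply: (big_ind L) => // [c1 c2 Lc1 Lc2|k _].
  by rewrite -[c1]scale1r; apply: Llin.
by rewrite -[_ *: _]addr0 rowK; apply: Llin.
Qed.

End Krylov.

Lemma krylov_row_full (F : closedFieldType) n (A : 'M[F]_n.+1) (u : 'rV[F]_n.+1) :
  (forall a (phi : 'cV_n.+1), A *m phi = a *: phi -> u *m phi = 0 -> phi = 0) ->
  row_full (krylov_mx A u).
Proof.
move=> no_eigen; apply: contraT => not_full; set K := krylov_mx A u.
have ker_nz : kermx K^T != 0 by rewrite kermx_eq0 /row_free mxrank_tr.
have ker_stable : stablemx (kermx K^T) A^T.
  have [D KA] := submxP (stablemx_krylov A u).
  by apply/sub_kermxP; rewrite -mulmxA -trmx_mul KA trmx_mul mulmxA mulmx_ker mul0mx.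
have [a [v [/sub_kermxP vK v_nz vA]]] := stablemx_eigenvector ker_stable ker_nz.
suff /(congr1 trmx) : v^T = 0 by rewrite trmxK trmx0 => v0; rewrite v0 eqxx in v_nz.
apply: (no_eigen a); first by rewrite -[A]trmxK -trmx_mul vA linearZ.
have [w ->] := submxP (sub_krylov A u).
by rewrite -/K -mulmxA -[K]trmxK -trmx_mul vK trmx0 mulmx0.
Qed.

Section GradedSubmodules.
Variables (F : fieldType) (V0 V1 : lmodType F).
Local Notation V := (V0 * V1)%type.

Section Preserves.
Variables (S0 : V0 -> Prop) (S1 : V1 -> Prop).

Definition preserves (f : V -> V) : Prop :=
  forall v0 v1, S0 v0 -> S1 v1 -> S0 (f (v0, v1)).1 /\ S1 (f (v0, v1)).2.

Hypotheses (S00 : S0 0) (S10 : S1 0).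
Hypothesis S0_lin : forall (a : F) u w, S0 u -> S0 w -> S0 (a *: u + w).
Hypothesis S1_lin : forall (a : F) u w, S1 u -> S1 w -> S1 (a *: u + w).

Lemma preserves_ext f g : f =1 g -> preserves g -> preserves f.
Proof. by move=> fg pg v0 v1 h0 h1; rewrite fg; apply: pg. Qed.

Lemma preserves_id : preserves id.
Proof. by []. Qed.

Lemma preserves0 : preserves (fun=> 0).
Proof. by move=> *; split. Qed.

Lemma preserves_comp f g : preserves f -> preserves g -> preserves (f \o g).
Proof.
move=> pf pg v0 v1 h0 h1; have [g0 g1] := pg v0 v1 h0 h1.
by have := pf _ _ g0 g1; rewrite /=; case: (g (v0, v1)).
Qed.

Lemma preserves_lin a f g :
  preserves f -> preserves g -> preserves (fun v => a *: f v + g v).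
Proof.
move=> pf pg v0 v1 h0 h1; have [f0 f1] := pf v0 v1 h0 h1.
by have [g0 g1] := pg v0 v1 h0 h1; split; [apply: S0_lin | apply: S1_lin].
Qed.

Lemma preservesZ a f : preserves f -> preserves (fun v => a *: f v).
Proof.
by move=> pf; apply: preserves_ext (preserves_lin a pf preserves0) => v; rewrite addr0.
Qed.

Lemma preservesB f g : preserves f -> preserves g -> preserves (fun v => f v - g v).
Proof.
move=> pf pg; apply: preserves_ext (preserves_lin (-1) pg pf) => v.
by rewrite scaleN1r addrC.
Qed.

Lemma alg_gen_preserves (G : (V -> V) -> Prop) :
  (forall f, G f -> preserves f) -> forall f, alg_gen G f -> preserves f.
Proof.
move=> pG f; elim=> {f} [f /pG //| |f g _ pf _ pg|c f _ pf|f g _ pf _ pg].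
- exact: preserves_id.
- by apply: preserves_ext (preserves_lin 1 pf pg) => v; rewrite scale1r.
- exact: preservesZ.
- exact: preserves_comp.
Qed.

End Preserves.

Lemma graded_simple_transfer (G G' : (V -> V) -> Prop) :
  (forall S0 S1, graded_submodule G' S0 S1 -> forall f, G f -> preserves S0 S1 f) ->
  graded_simple G -> graded_simple G'.
Proof.
move=> GG' [V_nz simpleG]; split=> // S0 S1 subS; apply: simpleG.
have [S00 S10 S0_lin S1_lin _] := subS; split=> //.
exact: alg_gen_preserves (GG' _ _ subS).
Qed.

End GradedSubmodules.

Lemma eq_setT_card (T : finType) (A : {set T}) : (A == setT) = (#|A| == #|T|).
Proof. by rewrite eqEcard subsetT cardsT eqn_leq max_card. Qed.

Lemma sum_card1 (T : finType) (M : nmodType) (G : {set T} -> M) :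
  \sum_(A : {set T} | #|A| == 1%N) G A = \sum_x G [set x].
Proof.
rewrite -(big_imset _ (in2W (@set1_inj T))) /=; apply: eq_bigl => A.
by apply/cards1P/imsetP => [[x ->]|[x _ ->]]; exists x.
Qed.

Lemma enum_set2_lt n (i j : 'I_n) : (i < j)%N -> enum [set i; j] = [:: i; j].
Proof.
move=> lt_ij; have lt_trans : transitive (relpre (val : 'I_n -> nat) ltn).
  by move=> y x z; exact: ltn_trans.
apply: (sorted_eq lt_trans).
- by move=> x y /andP[/= lt_xy lt_yx]; move: (ltn_trans lt_xy lt_yx); rewrite ltnn.
- rewrite /enum_mem -enumT sorted_filter // -sorted_map val_enum_ord.
  exact: iota_ltn_sorted.
- by rewrite /= lt_ij.
apply: uniq_perm; rewrite ?enum_uniq //= ?inE -?val_eqE ?neq_ltn ?lt_ij // => x.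
by rewrite mem_enum !inE.
Qed.

Lemma sum_card2 n (M : nmodType) (G : {set 'I_n} -> M) :
  \sum_(A : {set 'I_n} | #|A| == 2%N) G A =
  \sum_(i : 'I_n) \sum_(j : 'I_n | (i < j)%N) G [set i; j].
Proof.
pose h (p : 'I_n * 'I_n) := [set p.1; p.2].
have h_inj : {in [pred p : 'I_n * 'I_n | (p.1 < p.2)%N] &, injective h}.
  move=> [a b] [c d]; rewrite !inE /= => lt_ab lt_cd /setP E.
  move: (E a) (E b); rewrite set21 set22 => /esym/set2P[]ea /esym/set2P[]eb;
    rewrite ea eb ?ltnn // in lt_ab *.
  by move: (ltn_trans lt_cd lt_ab); rewrite ltnn.
rewrite pair_big_dep -(big_imset _ h_inj) /=; apply: eq_bigl => A.
apply/cards2P/imsetP => [[x [y [ne_xy ->]]]|[[a b] lt_ab ->]].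
  case: (ltngtP x y) => [lt_xy|lt_yx|/val_inj eq_xy]; last by rewrite eq_xy eqxx in ne_xy.
    by exists (x, y).
  by exists (y, x); rewrite // /h setUC.
by rewrite inE in lt_ab; exists a, b; rewrite -val_eqE neq_ltn lt_ab.
Qed.

Lemma sum_antisym_pairs (M : zmodType) n (f : 'I_n -> 'I_n -> M) :
  \sum_(i : 'I_n) \sum_(j : 'I_n | (i < j)%N) (f i j - f j i) =
  \sum_(i : 'I_n) \sum_(j : 'I_n)
    (if (i < j)%N then f i j else if (j < i)%N then - f i j else 0).
Proof.
under [RHS]eq_bigr => i _.
  rewrite (eq_bigr (fun j : 'I_n => (if (i < j)%N then f i j else 0) -
                                    (if (j < i)%N then f i j else 0))); last first.
    by move=> j _; case: ltngtP; rewrite ?subr0 ?sub0r.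
  rewrite sumrB -!big_mkcond /=.
  over.
rewrite /= sumrB; under eq_bigr do rewrite sumrB; rewrite sumrB; congr (_ - _).
exact: (exchange_big_dep xpredT).
Qed.

Section XiOperators.
Variables (F : fieldType) (V0 V1 : lmodType F).
Local Notation V := (V0 * V1)%type.
Variables (n : nat) (xi : 'I_n -> {linear V -> V}) (s : 'I_n -> F).
Local Notation xif := (fun i => xi i : V -> V).
Hypothesis xi_anti : forall i j v, i != j -> xi i (xi j v) + xi j (xi i v) = 0.
Hypothesis xi_sq : forall i v, xi i (xi i v) = s i *: v.

Lemma xi_comb_is_linear (c : 'rV[F]_n) : linear (fun v => \sum_m c 0 m *: xi m v).
Proof.
move=> a u w; rewrite scaler_sumr -big_split; apply: eq_bigr => m _ /=.
by rewrite linearP scalerDr !scalerA mulrC.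
Qed.

Definition xi_comb (c : 'rV[F]_n) : {linear V -> V} :=
  HB.pack (fun v => \sum_m c 0 m *: xi m v)
    (GRing.isLinear.Build F V V *:%R _ (xi_comb_is_linear c)).

Lemma xi_combE c v : xi_comb c v = \sum_m c 0 m *: xi m v.
Proof. by []. Qed.

Lemma xi_comb_linear_coef a c d v :
  xi_comb (a *: c + d) v = a *: xi_comb c v + xi_comb d v.
Proof.
rewrite !xi_combE scaler_sumr -big_split; apply: eq_bigr => m _ /=.
by rewrite !mxE scalerDl scalerA.
Qed.

Lemma xi_comb0 v : xi_comb 0 v = 0.
Proof. by rewrite xi_combE big1 // => m _; rewrite mxE scale0r. Qed.

Lemma xi_comb_delta i v : xi_comb (delta_mx 0 i) v = xi i v.
Proof.
rewrite xi_combE (bigD1 i) //= mxE !eqxx scale1r big1 ?addr0 // => m ne_mi.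
by rewrite mxE (negbTE ne_mi) andbF scale0r.
Qed.

Lemma xi_comb_anticomm i c w :
  xi i (xi_comb c w) + xi_comb c (xi i w) = (2 * (c 0 i * s i)) *: w.
Proof.
rewrite !xi_combE linear_sum -big_split (bigD1 i) //= big1 => [|m ne_mi]; last first.
  by rewrite linearZ -scalerDr /= xi_anti 1?eq_sym ?scaler0.
by rewrite linearZ -scalerDr /= xi_sq -scalerDl scalerA addr0; congr (_ *: _); ring.
Qed.

Lemma xi_pair_comb_commutator i j c w :
  xi i (xi j (xi_comb c w)) - xi_comb c (xi i (xi j w)) =
  (2 * (c 0 j * s j)) *: xi i w - (2 * (c 0 i * s i)) *: xi j w.
Proof.
have anticommE k u : xi k (xi_comb c u) = (2 * (c 0 k * s k)) *: u - xi_comb c (xi k u).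
  by rewrite -xi_comb_anticomm addrK.
by rewrite anticommE linearB linearZ /= anticommE opprB addrA addrAC addrK.
Qed.

Lemma u_op1E v : u_op xif 1 true v = xi_comb (const_mx 1) v.
Proof.
have oddE (J : {set 'I_1}) : (odd #|J| == true) = (J == setT).
  by rewrite eq_setT_card card_ord; have := max_card J; rewrite card_ord; case: #|J| => [|[]].
rewrite /u_op (sum_card1 (fun A : {set 'I_n} =>
  \sum_(J : {set 'I_1} | odd #|J| == true) mono_op xif (enum A) J v)).
rewrite xi_combE; apply: eq_bigr => i _; rewrite mxE scale1r enum_set1 (big_pred1 setT oddE).
by rewrite /mono_op enum_ordSl enum_ord0 /= in_setT expr0 scale1r.
Qed.

Lemma u_op2E v : u_op xif 2 false v =
  \sum_(i : 'I_n) \sum_(j : 'I_n | (i < j)%N) (s i * s j *: v - xi i (xi j v)).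
Proof.
have evenE (J : {set 'I_2}) : (odd #|J| == false) = (J == set0) || (J == setT).
  rewrite eq_setT_card -cards_eq0 card_ord; have := max_card J; rewrite card_ord.
  by case: #|J| => [|[|[]]].
rewrite /u_op sum_card2; apply: eq_bigr => i _; apply: eq_bigr => j lt_ij.
rewrite enum_set2_lt // (eq_bigl _ _ evenE) (bigD1 set0) ?eqxx //=.
rewrite (big_pred1 setT) => [|J]; last first.
  by case: eqP => [->|_]; rewrite ?andbF ?andbT //= eq_setT_card cards0 card_ord.
rewrite /mono_op !enum_ordSl enum_ord0 /= !in_set0 !in_setT /x_op /=.
by rewrite !xi_sq scalerA linearZ /= expr0 scale1r expr1 scaleN1r.
Qed.

Lemma u_op2_commutator c v :
  u_op xif 2 false (xi_comb c v) - xi_comb c (u_op xif 2 false v) =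
  2 *: xi_comb (c *m sign_mx s) v.
Proof.
pose f (m k : 'I_n) := (2 * (c 0 m * s m)) *: xi k v.
transitivity (\sum_(i : 'I_n) \sum_(j : 'I_n | (i < j)%N) (f i j - f j i)).
  rewrite !u_op2E (linear_sum (xi_comb c)) -sumrB; apply: eq_bigr => i _.
  rewrite (linear_sum (xi_comb c)) -sumrB; apply: eq_bigr => j _.
  rewrite linearB linearZ /= opprB addrC addrA subrK.
  by rewrite -opprB xi_pair_comb_commutator opprB.
rewrite sum_antisym_pairs xi_combE scaler_sumr.
under [RHS]eq_bigr => k _ do rewrite mxE scaler_suml scaler_sumr.
rewrite [RHS]exchange_big /=; apply: eq_bigr => m _; apply: eq_bigr => k _.
rewrite /f mxE !scalerA; case: ltngtP => _; rewrite ?mulr0 ?scale0r // -scaleNr.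
by congr (_ *: _); ring.
Qed.

End XiOperators.

Section Simplicity.
Variables (F : numClosedFieldType) (V0 V1 : lmodType F).
Local Notation V := (V0 * V1)%type.
Variables (n : nat) (xi : 'I_n.+1 -> {linear V -> V}) (s : 'I_n.+1 -> F).
Local Notation xif := (fun i => xi i : V -> V).
Hypothesis s_typical : typical s.
Hypothesis xi_anti : forall i j v, i != j -> xi i (xi j v) + xi j (xi i v) = 0.
Hypothesis xi_sq : forall i v, xi i (xi i v) = s i *: v.

Lemma xi_preserves_W_submodule S0 S1 :
  graded_submodule (W_gens xif) S0 S1 -> forall i, preserves S0 S1 (xi i).
Proof.
case=> S00 S10 S0_lin S1_lin W_stable i.
have pW f : W_gens xif f -> preserves S0 S1 f by move=> Wf; exact: W_stable _ (ag_gen Wf).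
have pU1 : preserves S0 S1 (u_op xif 1 true) by apply: pW; exists 1%N, true.
have pU2 : preserves S0 S1 (u_op xif 2 false).
  have [le2n|] := leqP 2 n.+1; first by apply: pW; exists 2%N, false.
  (* for n.+1 = 1, u_2(0) is no generator of W^1, but it vanishes *)
  rewrite ltnS => le_n1; apply: preserves_ext (preserves0 S00 S10) => v.
  rewrite (u_op2E xi_sq) big1 // => j _; rewrite big_pred0 // => k.
  by apply/negbTE; rewrite -leqNgt (leq_trans _ (leq0n j)) // -ltnS (leq_trans (ltn_ord k)).
suff pxi c : preserves S0 S1 (xi_comb xi c).
  by apply: preserves_ext (pxi (delta_mx 0 i)) => v; rewrite xi_comb_delta.
have full : row_full (krylov_mx (sign_mx s) (const_mx 1)).
  by apply: krylov_row_full => a phi; apply: sign_mx_eigen_sum0.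
move: c; apply: (krylov_full_ind full) => [|a c d pc pd||c pc].
- by apply: preserves_ext (preserves0 S00 S10) => v; rewrite xi_comb0.
- apply: preserves_ext (preserves_lin S0_lin S1_lin a pc pd) => v.
  exact: xi_comb_linear_coef.
- by apply: preserves_ext pU1 => v; rewrite u_op1E.
have two_nz : (2 : F) != 0 by rewrite pnatr_eq0.
apply: preserves_ext (preservesZ S00 S10 S0_lin S1_lin 2^-1
  (preservesB S0_lin S1_lin (preserves_comp pU2 pc) (preserves_comp pc pU2))) => v /=.
by rewrite (u_op2_commutator xi_anti xi_sq) scalerA mulVf ?scale1r.
Qed.

Lemma W_simple_of_U_simple : graded_simple (U_gens xif) -> graded_simple (W_gens xif).
Proof.
apply: graded_simple_transfer => S0 S1 subS _ [i ->].
exact: xi_preserves_W_submodule subS i.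
Qed.

End Simplicity.

Theorem theorem4p2 (R : realType) (n : nat) (s : 'I_n -> R[i])
    (V0 V1 : lmodType R[i]) (xi : 'I_n -> (V0 * V1)%type -> (V0 * V1)%type) :
  (0 < n)%N ->
  (* s is typical *)
  (forall i j : 'I_n, i != j -> s i + s j != 0) ->
  (* V = V0 (+) V1 is a Z_2-graded U(h_n)-module, xi_i acting by odd operators *)
  (forall i, is_linear_op (xi i)) ->
  (forall i, is_odd_op (xi i)) ->
  (forall (i j : 'I_n) v, i != j -> xi i (xi j v) + xi j (xi i v) = 0) ->
  (* x_i = xi_i^2 acts by the scalar s_i *)
  (forall i v, x_op xi i v = s i *: v) ->
  (* V is simple as a Z_2-graded U(h_n)-module, i.e. V = V(s) *)
  graded_simple (U_gens xi) ->
  (* then its restriction to W^n is simple *)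
  graded_simple (W_gens xi).
Proof.
case: n s xi => [//|n] s xi _ s_typical xi_linear _ xi_anti xi_sq.
pose xiL i : {linear _ -> _} :=
  HB.pack (xi i) (GRing.isLinear.Build _ _ _ _ (xi i) (xi_linear i)).
exact: (@W_simple_of_U_simple _ _ _ n xiL s s_typical xi_anti xi_sq).
Qed.
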